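(* For $\mathcal S=\{000,001,010,111\}\subseteq\{0,1\}^3$, every 3SS scheme with domain $\mathcal S$ satisfies $|\{\mathbf w:\Pr[\psi(\mathbf x,R)=\mathbf w]>0\}|\ge 6$ for some $\mathbf x\in\mathcal S$ (indeed for $\mathbf x=001$); in particular $\rho(\mathcal S)\ge\log_2 6$.
   Context: Binary triples $(x_1,x_2,x_3)\in\{0,1\}^3$ are written $x_1x_2x_3$. Let $\mathcal S\subseteq\{0,1\}^3$ be nonempty. A distribution scheme with domain $\mathcal S$ is a pair $(P_R,\psi)$ where $P_R$ is a probability distribution on a finite set $\mathcal R$ and $\psi:\mathcal S\times\mathcal R\to\mathcal W_{12}\times\mathcal W_{23}\times\mathcal W_{31}$ for finite share alphabets. Given $\mathbf x=(x_1,x_2,x_3)\in\mathcal S$, the shares are $(W_{12},W_{23},W_{31})=\psi(\mathbf x,R)$, $R\sim P_R$. Party $P_1$ sees $V_1=(W_{12},W_{31})$, $P_2$ sees $V_2=(W_{23},W_{12})$, $P_3$ sees $V_3=(W_{31},W_{23})$. It is a 3SS scheme if (Correctness) for each $i$ there is a function $\phi_i$ with $\Pr[\phi_i(V_i)=x_i]=1$ for every $\mathbf x\in\mathcal S$, and (Perfect privacy) for each $i$ and all $\mathbf x,\mathbf x'\in\mathcal S$ with $x_i=x'_i$, $V_i$ has the same distribution under secret $\mathbf x$ as under $\mathbf x'$. The randomness complexity $\rho(\mathcal S)$ is the minimum of $\log_2|\mathcal R|$ over all 3SS schemes with domain $\mathcal S$. *)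

From HB Require Import structures.
From mathcomp Require Import all_boot all_order all_algebra.
From mathcomp Require Import reals.
Set Implicit Arguments. Unset Strict Implicit. Unset Printing Implicit Defensive.
Import Order.TTheory GRing.Theory Num.Theory.
Local Open Scope ring_scope.

Definition triple := (bool * bool * bool)%type.
Definition tr (a b c : bool) : triple := (a, b, c).
Definition x1 (x : triple) : bool := x.1.1.
Definition x2 (x : triple) : bool := x.1.2.
Definition x3 (x : triple) : bool := x.2.

Section Scheme.
Variables (K : realType) (Rr W12 W23 W31 : finType).
Notation share := (W12 * W23 * W31)%type.

Definition is_distr (P : {ffun Rr -> K}) : Prop :=
  (forall r, 0 <= P r) /\ \sum_(r : Rr) P r = 1.

Definition prob (P : {ffun Rr -> K}) (E : pred Rr) : K := \sum_(r | E r) P r.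

Definition V1 (w : share) : (W12 * W31)%type := (w.1.1, w.2).
Definition V2 (w : share) : (W23 * W12)%type := (w.1.2, w.1.1).
Definition V3 (w : share) : (W31 * W23)%type := (w.2, w.1.2).

Variable (S : {set triple}).
Variables (P : {ffun Rr -> K}) (psi : triple -> Rr -> share).
(* psi is only used on S x Rr (its values outside S are irrelevant) *)

Definition correct : Prop :=
  (exists phi1 : (W12 * W31)%type -> bool,
      forall x, x \in S -> prob P (fun r => phi1 (V1 (psi x r)) == x1 x) = 1) /\
  (exists phi2 : (W23 * W12)%type -> bool,
      forall x, x \in S -> prob P (fun r => phi2 (V2 (psi x r)) == x2 x) = 1) /\
  (exists phi3 : (W31 * W23)%type -> bool,
      forall x, x \in S -> prob P (fun r => phi3 (V3 (psi x r)) == x3 x) = 1).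

Definition perfectly_private : Prop :=
  (forall x x', x \in S -> x' \in S -> x1 x = x1 x' ->
     forall v, prob P (fun r => V1 (psi x r) == v) = prob P (fun r => V1 (psi x' r) == v)) /\
  (forall x x', x \in S -> x' \in S -> x2 x = x2 x' ->
     forall v, prob P (fun r => V2 (psi x r) == v) = prob P (fun r => V2 (psi x' r) == v)) /\
  (forall x x', x \in S -> x' \in S -> x3 x = x3 x' ->
     forall v, prob P (fun r => V3 (psi x r) == v) = prob P (fun r => V3 (psi x' r) == v)).

Definition is_3SS : Prop := is_distr P /\ correct /\ perfectly_private.

Definition share_support (x : triple) : {set share} :=
  [set w | 0 < prob P (fun r => psi x r == w)].

End Scheme.

Definition S5 : {set triple} :=
  [set tr false false false; tr false false true; tr false true false; tr true true true].

From mathcomp Require Import all_boot all_order all_algebra.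
From mathcomp Require Import reals.
Import Order.TTheory GRing.Theory Num.Theory.
Set Implicit Arguments. Unset Strict Implicit. Unset Printing Implicit Defensive.
Local Open Scope ring_scope.

(* Only the SUPPORT of the scheme matters: call a share vector w = (a, b, c)
   (a = W12, b = W23, c = W31) reachable from x if psi(x, r) = w for some r
   with P r > 0.  Correctness says that every reachable share of x is decoded
   to the right bit by each party; perfect privacy says that if x and x' agree
   on x_i, then any view of P_i seen under x is also seen under x' via some
   reachable share of x'.

   The second part chases reachable shares of
   001 through the other secrets of S: it finds three reachable shares of 001
   with pairwise distinct W12-components, and for every reachable share of 001
   a second one with the same W12-component and a different W23-component.
   This yields six distinct reachable shares of 001; since each is the image
   of some r, also |R| >= 6. *)

Section DistributionSupport.
Variables (K : realType) (Rr W12 W23 W31 : finType).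
Variable P : {ffun Rr -> K}.
Hypothesis P_ge0 : forall r, 0 <= P r.
Variable psi : triple -> Rr -> (W12 * W23 * W31)%type.

Lemma prob_gt0P (E : pred Rr) : 0 < prob P E <-> exists r, E r /\ 0 < P r.
Proof.
split=> [|[r [Er Pr_gt0]]]; last first.
  rewrite /prob (bigD1 r) //=.
  by apply: (lt_le_trans Pr_gt0); rewrite lerDl sumr_ge0.
case: (pickP (fun r => E r && (0 < P r))) => [r /andP[Er Pr_gt0] _|noE].
  by exists r.
rewrite /prob big1 ?ltxx // => r Er.
apply/eqP; rewrite eq_le P_ge0 andbT leNgt; apply/negP => Pr_gt0.
by move: (noE r); rewrite Er Pr_gt0.
Qed.

Lemma prob1_on_support (E : pred Rr) :
  \sum_(r : Rr) P r = 1 -> prob P E = 1 -> forall r, 0 < P r -> E r.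
Proof.
move=> P_sum1 PE1 r Pr_gt0; apply/negPn/negP => notEr.
have PnotE0 : prob P (predC E) = 0.
  by apply/eqP; rewrite -(subrr 1) -{1}P_sum1 (bigID E) /= -/(prob P E) PE1 addrC addrK.
move: PnotE0 => /eqP; rewrite psumr_eq0 => [/allP/(_ r)|i _]; last exact: P_ge0.
rewrite mem_index_enum /= notEr => /(_ isT)/implyP/(_ isT)/eqP Pr0.
by move: Pr_gt0; rewrite Pr0 ltxx.
Qed.

Lemma share_supportP {x w} :
  reflect (exists r, 0 < P r /\ psi x r = w) (w \in share_support P psi x).
Proof.
rewrite inE; apply: (iffP idP).
  by move=> /prob_gt0P [r [/eqP <- Pr_gt0]]; exists r.
by move=> [r [Pr_gt0 <-]]; apply/prob_gt0P; exists r.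
Qed.

Lemma share_support_card x : (#|share_support P psi x| <= #|Rr|)%N.
Proof.
apply: leq_trans (leq_imset_card (psi x) Rr); apply: subset_leq_card.
by apply/subsetP => w /share_supportP [r [_ <-]]; apply: imset_f.
Qed.

Lemma decode_on_support (T : Type) (view : (W12 * W23 * W31)%type -> T)
    (phi : T -> bool) x b w :
  \sum_(r : Rr) P r = 1 -> prob P (fun r => phi (view (psi x r)) == b) = 1 ->
  w \in share_support P psi x -> phi (view w) = b.
Proof.
move=> P_sum1 decodes /share_supportP [r [Pr_gt0 <-]].
exact/eqP/(prob1_on_support P_sum1 decodes).
Qed.

Lemma view_transfer (T : eqType) (view : (W12 * W23 * W31)%type -> T) x x' w :
  (forall v, prob P (fun r => view (psi x r) == v) =
             prob P (fun r => view (psi x' r) == v)) ->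
  w \in share_support P psi x ->
  exists2 w', w' \in share_support P psi x' & view w' = view w.
Proof.
move=> same_view /share_supportP [r [Pr_gt0 <-]].
have : 0 < prob P (fun r' => view (psi x r') == view (psi x r)).
  by apply/prob_gt0P; exists r.
rewrite same_view => /prob_gt0P [r' [/eqP view_eq Pr'_gt0]].
by exists (psi x' r') => //; apply/share_supportP; exists r'.
Qed.

End DistributionSupport.

Lemma six_shares_card (W12 W23 W31 : finType) (X : {set (W12 * W23 * W31)%type})
    a1 a2 a3 b1 b1' b2 b2' b3 b3' c1 c1' c2 c2' c3 c3' :
  a1 != a2 -> a1 != a3 -> a2 != a3 -> b1 != b1' -> b2 != b2' -> b3 != b3' ->
  ((a1, b1), c1) \in X -> ((a1, b1'), c1') \in X ->
  ((a2, b2), c2) \in X -> ((a2, b2'), c2') \in X ->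
  ((a3, b3), c3) \in X -> ((a3, b3'), c3') \in X -> (6 <= #|X|)%N.
Proof.
move=> a12 a13 a23 b11 b22 b33 X1 X1' X2 X2' X3 X3'.
set s := [:: ((a1, b1), c1); ((a1, b1'), c1'); ((a2, b2), c2);
             ((a2, b2'), c2'); ((a3, b3), c3); ((a3, b3'), c3')].
have uniq_s : uniq s.
  by rewrite /s /= !inE !xpair_eqE !eqxx (negbTE a12) (negbTE a13) (negbTE a23)
    (negbTE b11) (negbTE b22) (negbTE b33) /= ?andbF.
have sub_s : {subset s <= enum X}.
  by apply/allP; rewrite /= !mem_enum X1 X1' X2 X2' X3 X3'.
by rewrite cardE; apply: uniq_leq_size sub_s.
Qed.

Section SchemeOnS5.
Variables (K : realType) (Rr W12 W23 W31 : finType).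
Variables (P : {ffun Rr -> K}) (psi : triple -> Rr -> (W12 * W23 * W31)%type).
Variables (phi1 : (W12 * W31)%type -> bool) (phi2 : (W23 * W12)%type -> bool)
          (phi3 : (W31 * W23)%type -> bool).
Hypothesis distrP : is_distr P.
Hypothesis dec1 : forall x, x \in S5 -> prob P (fun r => phi1 (V1 (psi x r)) == x1 x) = 1.
Hypothesis dec2 : forall x, x \in S5 -> prob P (fun r => phi2 (V2 (psi x r)) == x2 x) = 1.
Hypothesis dec3 : forall x, x \in S5 -> prob P (fun r => phi3 (V3 (psi x r)) == x3 x) = 1.
Hypothesis priv : perfectly_private S5 P psi.

Local Notation supp x := (share_support P psi x).
Local Notation s000 := (tr false false false).
Local Notation s001 := (tr false false true).
Local Notation s010 := (tr false true false).
Local Notation s111 := (tr true true true).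

Lemma decode1 x a b c : x \in S5 -> ((a, b), c) \in supp x -> phi1 (a, c) = x1 x.
Proof. by move=> xS w; apply: (decode_on_support distrP.1 distrP.2 (dec1 xS) w). Qed.

Lemma decode2 x a b c : x \in S5 -> ((a, b), c) \in supp x -> phi2 (b, a) = x2 x.
Proof. by move=> xS w; apply: (decode_on_support distrP.1 distrP.2 (dec2 xS) w). Qed.

Lemma decode3 x a b c : x \in S5 -> ((a, b), c) \in supp x -> phi3 (c, b) = x3 x.
Proof. by move=> xS w; apply: (decode_on_support distrP.1 distrP.2 (dec3 xS) w). Qed.

Lemma transfer1 x x' a b c : x \in S5 -> x' \in S5 -> x1 x = x1 x' ->
  ((a, b), c) \in supp x -> exists b', ((a, b'), c) \in supp x'.
Proof.
move=> xS x'S same /(view_transfer distrP.1 (priv.1 x x' xS x'S same)).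
by case=> [[[a' b'] c']] w'S [<- <-]; exists b'.
Qed.

Lemma transfer2 x x' a b c : x \in S5 -> x' \in S5 -> x2 x = x2 x' ->
  ((a, b), c) \in supp x -> exists c', ((a, b), c') \in supp x'.
Proof.
move=> xS x'S same /(view_transfer distrP.1 (priv.2.1 x x' xS x'S same)).
by case=> [[[a' b'] c']] w'S [<- <-]; exists c'.
Qed.

Lemma transfer3 x x' a b c : x \in S5 -> x' \in S5 -> x3 x = x3 x' ->
  ((a, b), c) \in supp x -> exists a', ((a', b), c) \in supp x'.
Proof.
move=> xS x'S same /(view_transfer distrP.1 (priv.2.2 x x' xS x'S same)).
by case=> [[[a' b'] c']] w'S [<- <-]; exists a'.
Qed.

Let in000 : s000 \in S5. Proof. by rewrite !inE. Qed.
Let in001 : s001 \in S5. Proof. by rewrite !inE. Qed.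
Let in010 : s010 \in S5. Proof. by rewrite !inE. Qed.
Let in111 : s111 \in S5. Proof. by rewrite !inE. Qed.

(* Every reachable share (a, b, c) of 001 has a companion (a, b', c') with
   b' != b: go to 000 keeping (W12, W23), then back keeping (W12, W31); the
   W23-share cannot be b again, since P3 would see the same view for both. *)
Lemma companion_share a b c : ((a, b), c) \in supp s001 ->
  exists b' c', ((a, b'), c') \in supp s001 /\ b != b'.
Proof.
move=> w001.
have [c' w000] := transfer2 in001 in000 erefl w001.
have [b' w001'] := transfer1 in000 in001 erefl w000.
exists b', c'; split => //; apply/eqP => eq_b; move: w001'; rewrite -eq_b => w001'.
by have := decode3 in000 w000; rewrite (decode3 in001 w001').
Qed.

(* Starting from (a, b, c): via 010 one reaches a share of 000 with
   W12-component a' != a (otherwise P2 could not tell 010 from 000), and a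
   share of 111 with W12-component a'' != a, a' (P1 tells 111 from 001 and
   000); each is then brought back to 001 keeping W12. *)
Lemma three_W12_shares a b c : ((a, b), c) \in supp s001 ->
  exists a' a'' b' b'' c' c'',
    [/\ a != a', a != a'' & a' != a''] /\
    ((a', b'), c') \in supp s001 /\ ((a'', b''), c'') \in supp s001.
Proof.
move=> w001.
have [b1 w010] := transfer1 in001 in010 erefl w001.
have [a' w000] := transfer3 in010 in000 erefl w010.
have [b' w001'] := transfer1 in000 in001 erefl w000.
have [a'' w111] := transfer3 in001 in111 erefl w001.
have [c1 w010'] := transfer2 in111 in010 erefl w111.
have [b'' w001''] := transfer1 in010 in001 erefl w010'.
exists a', a'', b', b'', c, c1; split; last by [].
have phi1_111 := decode1 in111 w111.
split; apply/eqP => eq_a.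
- by move: w000; rewrite -eq_a => /(decode2 in000); rewrite (decode2 in010 w010).
- by move: phi1_111; rewrite -eq_a (decode1 in001 w001).
- by move: phi1_111; rewrite -eq_a (decode1 in000 w000).
Qed.

Lemma support001_ge6 : (6 <= #|supp s001|)%N.
Proof.
have [[[a b] c] w001] : exists w, w \in supp s001.
  have : 0 < prob P predT by rewrite /prob distrP.2 ltr01.
  move=> /(prob_gt0P distrP.1) [r [_ Pr_gt0]].
  by exists (psi s001 r); apply/(share_supportP distrP.1); exists r.
have [a' [a'' [b' [b'' [c' [c'' [[aa' aa'' a'a''] [w' w'']]]]]]]] :=
  three_W12_shares w001.
have [b1 [c1 [w1 bb1]]] := companion_share w001.
have [b1' [c1' [w1' bb1']]] := companion_share w'.
have [b1'' [c1'' [w1'' bb1'']]] := companion_share w''.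
exact: (six_shares_card aa' aa'' a'a'' bb1 bb1' bb1'' w001 w1 w' w1' w'' w1'').
Qed.

End SchemeOnS5.

Theorem mainTheorem5 (K : realType) (Rr W12 W23 W31 : finType)
    (P : {ffun Rr -> K}) (psi : triple -> Rr -> (W12 * W23 * W31)%type) :
  is_3SS S5 P psi ->
  (6 <= #|share_support P psi (tr false false true)|)%N /\ (6 <= #|Rr|)%N.
Proof.
move=> [distrP [[[phi1 dec1] [[phi2 dec2] [phi3 dec3]]] priv]].
have supp_ge6 := support001_ge6 distrP dec1 dec2 dec3 priv.
split=> //.
exact: leq_trans supp_ge6 (share_support_card distrP.1 psi _).
Qed.
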